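(* Let $f\colon X\to Y$ be a dc-embedding of two-sorted ultrametric spaces. (1) $f$ is continuous if and only if $D_f$ is continuous at $0$ or $X$ is discrete. (2) $f$ is uniformly continuous if and only if $D_f$ is continuous at $0$ or $X$ is uniformly discrete. In particular, a dc-isomorphism is always a uniform homeomorphism.
   Context: A two-sorted ultrametric space is a triple $(X,d_X,D_X)$ where $D_X$ is a linearly ordered set with least element $0$, $X$ is a set, and $d_X\colon X\times X\to D_X$ is symmetric, $d_X(x,y)=0\iff x=y$, and $d_X(x,z)\le\max\{d_X(x,y),d_X(y,z)\}$. A dc-embedding $f\colon X\to Y$ is an injection $f\colon X\to Y$ together with an order embedding $D_f\colon D_X\to D_Y$ with $D_f(0)=0$ such that $d_Y(f(x),f(x'))=D_f(d_X(x,x'))$; a dc-isomorphism is one bijective in both sorts. For $a\in X$ and $r\in D_X\setminus\{0\}$, $B_r(a)=\{x: d_X(x,a)<r\}$. The topology of $X$: $U$ is open iff for each $a\in U$ there is $r\in D_X\setminus\{0\}$ with $B_r(a)\subseteq U$; the uniformity is generated by the partitions $\{B_r(a):a\in X\}$, $r\in D_X\setminus\{0\}$. Thus $f$ is continuous iff for all $\varepsilon\in D_Y\setminus\{0\}$ and $x\in X$ there is $\delta\in D_X\setminus\{0\}$ with $f[B_\delta(x)]\subseteq B_\varepsilon(f(x))$, and uniformly continuous if $\delta$ can be chosen independently of $x$. $D_f$ is continuous at $0$ if there is no $\varepsilon\in D_Y$ with $0<\varepsilon<D_f(r)$ for all $r\in D_X\setminus\{0\}$. $X$ is discrete if for each $x$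 there is $\varepsilon\in D_X\setminus\{0\}$ with $B_\varepsilon(x)=\{x\}$, and uniformly discrete if $\varepsilon$ can be chosen independently of $x$. *)

From HB Require Import structures.
From mathcomp Require Import all_boot all_order.
Set Implicit Arguments. Unset Strict Implicit. Unset Printing Implicit Defensive.
Import Order.TTheory.
Local Open Scope order_scope.

(* A two-sorted ultrametric space (X, d_X, D_X): D_X is a linearly ordered
   set with least element 0 (a bOrderType, 0 := \bot), and d : X -> X -> D. *)
Record ultrametric (disp : Order.disp_t) (D : bOrderType disp) (X : Type) := Ultrametric {
  udist :> X -> X -> D;
  udist_sym : forall x y, udist x y = udist y x;
  udist_eq0 : forall x y, udist x y = \bot <-> x = y;
  udist_ultra : forall x y z, udist x z <= Order.max (udist x y) (udist y z)
}.

Section Defs.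
Context (dX : Order.disp_t) (DX : bOrderType dX) (X : Type) (mX : ultrametric DX X).
Context (dY : Order.disp_t) (DY : bOrderType dY) (Y : Type) (mY : ultrametric DY Y).

Definition ball (disp : Order.disp_t) (D : bOrderType disp) (T : Type)
  (m : ultrametric D T) (a : T) (r : D) : T -> Prop := fun x => m x a < r.

Definition dc_embedding (f : X -> Y) (Df : DX -> DY) : Prop :=
  [/\ injective f, {mono Df : r s / r <= s}, Df \bot = \bot &
      forall x x', mY (f x) (f x') = Df (mX x x')].

Definition um_continuous (f : X -> Y) : Prop :=
  forall (eps : DY), \bot < eps -> forall x : X,
    exists delta : DX, \bot < delta /\
      (forall x', ball mX x delta x' -> ball mY (f x) eps (f x')).

Definition um_unif_continuous (f : X -> Y) : Prop :=
  forall (eps : DY), \bot < eps ->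
    exists delta : DX, \bot < delta /\ forall x : X,
      (forall x', ball mX x delta x' -> ball mY (f x) eps (f x')).

Definition cont_at0 (Df : DX -> DY) : Prop :=
  ~ exists eps : DY, \bot < eps /\ forall r : DX, \bot < r -> eps < Df r.

End Defs.

Definition um_discrete (disp : Order.disp_t) (D : bOrderType disp) (T : Type)
  (m : ultrametric D T) : Prop :=
  forall x : T, exists eps : D, \bot < eps /\ forall y, ball m x eps y -> y = x.

Definition um_unif_discrete (disp : Order.disp_t) (D : bOrderType disp) (T : Type)
  (m : ultrametric D T) : Prop :=
  exists eps : D, \bot < eps /\ forall x y : T, ball m x eps y -> y = x.

From HB Require Import structures.
From mathcomp Require Import all_boot all_order.
From Stdlib Require Import Classical.
Import Order.TTheory.
Local Open Scope order_scope.

(* Since d(f x, f x') = D_f(d(x, x')) and D_f is an order embedding, f maps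
   B_r(x) onto B_{D_f r}(f x) ∩ f[X].  If D_f is continuous at 0, every
   eps > 0 dominates some D_f r with r > 0, and this r works as a uniform
   delta.  Otherwise some eps > 0 lies below every D_f r, r > 0; then the
   eps-ball around f x meets f[X] only in f x, so a delta witnessing
   (uniform) continuity for this eps makes X (uniformly) discrete.  For a
   dc-isomorphism D_f is onto, hence continuous at 0, and D_f eps is a
   uniform delta for the inverse map. *)

Section UltrametricFacts.
Context {disp : Order.disp_t} {D : bOrderType disp} {T : Type}
  (m : ultrametric D T).

Lemma udistxx (x : T) : m x x = \bot.
Proof. exact/(udist_eq0 m). Qed.

Lemma udist_gt0 {x y : T} : x <> y -> \bot < m x y.
Proof. by move=> neq_xy; rewrite lt0x; apply/eqP => /(udist_eq0 m). Qed.

Lemma ball_center (a : T) (r : D) : \bot < r -> ball m a r a.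
Proof. by rewrite /ball udistxx. Qed.

End UltrametricFacts.

Section ContinuityFacts.
Context (dX : Order.disp_t) (DX : bOrderType dX) (X : Type) (mX : ultrametric DX X).
Context (dY : Order.disp_t) (DY : bOrderType dY) (Y : Type) (mY : ultrametric DY Y).
Variable f : X -> Y.

Lemma unif_continuous_continuous :
  um_unif_continuous mX mY f -> um_continuous mX mY f.
Proof.
move=> fuc eps eps_gt0 x; have [delta [delta_gt0 fball]] := fuc eps eps_gt0.
by exists delta; split=> //; apply: fball.
Qed.

Lemma discrete_continuous : um_discrete mX -> um_continuous mX mY f.
Proof.
move=> Xdisc eps eps_gt0 x; have [delta [delta_gt0 isolated]] := Xdisc x.
by exists delta; split=> // x' /isolated ->; apply: ball_center.
Qed.

Lemma unif_discrete_unif_continuous :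
  um_unif_discrete mX -> um_unif_continuous mX mY f.
Proof.
case=> delta [delta_gt0 isolated] eps eps_gt0.
by exists delta; split=> // x x' /isolated ->; apply: ball_center.
Qed.

End ContinuityFacts.

Section DcEmbedding.
Context (dX : Order.disp_t) (DX : bOrderType dX) (X : Type) (mX : ultrametric DX X).
Context (dY : Order.disp_t) (DY : bOrderType dY) (Y : Type) (mY : ultrametric DY Y).
Variables (f : X -> Y) (Df : DX -> DY).
Hypothesis Df_mono : {mono Df : r s / r <= s}.
Hypothesis Df0 : Df \bot = \bot.
Hypothesis f_udist : forall x x', mY (f x) (f x') = Df (mX x x').

Let Df_lt : {mono Df : r s / r < s} := leW_mono Df_mono.

Lemma Df_gt0 (r : DX) : (\bot < Df r) = (\bot < r).
Proof. by rewrite -Df0 Df_lt. Qed.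

Lemma ball_image (x x' : X) (r : DX) :
  ball mY (f x) (Df r) (f x') = ball mX x r x'.
Proof. by rewrite /ball f_udist Df_lt. Qed.

Definition gap_at0 (eps : DY) := \bot < eps /\ forall r, \bot < r -> eps < Df r.

Lemma not_cont_at0P : ~ cont_at0 Df -> exists eps, gap_at0 eps.
Proof. exact: NNPP. Qed.

Lemma cont_at0P {eps : DY} :
  cont_at0 Df -> \bot < eps -> exists2 r, \bot < r & Df r <= eps.
Proof.
move=> Dcont eps_gt0; apply: NNPP => no_r; apply: Dcont; exists eps.
split=> // r r_gt0; rewrite ltNge; apply/negP => Dr_le.
by apply: no_r; exists r.
Qed.

Lemma gap_ball_image (eps : DY) (x x' : X) :
  gap_at0 eps -> ball mY (f x) eps (f x') -> x' = x.
Proof.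
case=> _ below; rewrite /ball f_udist => near; apply: NNPP => neq.
by have := below _ (udist_gt0 mX neq); rewrite ltNge (ltW near).
Qed.

Lemma cont_at0_unif_continuous : cont_at0 Df -> um_unif_continuous mX mY f.
Proof.
move=> Dcont eps eps_gt0; have [r r_gt0 Dr_le] := cont_at0P Dcont eps_gt0.
exists r; split=> // x x'; rewrite -ball_image => near.
exact: lt_le_trans near Dr_le.
Qed.

Lemma continuous_discrete :
  um_continuous mX mY f -> ~ cont_at0 Df -> um_discrete mX.
Proof.
move=> fc /not_cont_at0P [eps gap] x.
have [delta [delta_gt0 fball]] := fc eps gap.1 x.
by exists delta; split=> // x' /fball; apply: gap_ball_image.
Qed.

Lemma unif_continuous_unif_discrete :
  um_unif_continuous mX mY f -> ~ cont_at0 Df -> um_unif_discrete mX.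
Proof.
move=> fuc /not_cont_at0P [eps gap].
have [delta [delta_gt0 fball]] := fuc eps gap.1.
by exists delta; split=> // x x' /fball; apply: gap_ball_image.
Qed.

Lemma continuousE : um_continuous mX mY f <-> cont_at0 Df \/ um_discrete mX.
Proof.
split=> [fc | [Dcont | Xdisc]].
- have [Dcont | Dncont] := classic (cont_at0 Df); first by left.
  by right; apply: continuous_discrete.
- exact/unif_continuous_continuous/cont_at0_unif_continuous.
- exact: discrete_continuous.
Qed.

Lemma unif_continuousE :
  um_unif_continuous mX mY f <-> cont_at0 Df \/ um_unif_discrete mX.
Proof.
split=> [fuc | [Dcont | Xdisc]].
- have [Dcont | Dncont] := classic (cont_at0 Df); first by left.
  by right; apply: unif_continuous_unif_discrete.
- exact: cont_at0_unif_continuous.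
- exact: unif_discrete_unif_continuous.
Qed.

Lemma surjective_cont_at0 : (forall s, exists r, Df r = s) -> cont_at0 Df.
Proof.
move=> Df_onto [eps [eps_gt0 below]]; have [r Dr] := Df_onto eps.
have r_gt0 : \bot < r by rewrite -Df_gt0 Dr.
by have := below r r_gt0; rewrite Dr ltxx.
Qed.

Lemma inverse_unif_continuous (g : Y -> X) :
  cancel g f -> um_unif_continuous mY mX g.
Proof.
move=> gK eps eps_gt0; exists (Df eps); split; first by rewrite Df_gt0.
by move=> y y'; rewrite -{1}(gK y) -{1}(gK y') ball_image.
Qed.

End DcEmbedding.

Theorem lemma2p13
  (dX : Order.disp_t) (DX : bOrderType dX) (X : Type) (mX : ultrametric DX X)
  (dY : Order.disp_t) (DY : bOrderType dY) (Y : Type) (mY : ultrametric DY Y)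
  (f : X -> Y) (Df : DX -> DY) :
  dc_embedding mX mY f Df ->
  [/\ (um_continuous mX mY f <-> cont_at0 Df \/ um_discrete mX),
      (um_unif_continuous mX mY f <-> cont_at0 Df \/ um_unif_discrete mX) &
      (forall g : Y -> X, cancel f g -> cancel g f -> (forall s : DY, exists r : DX, Df r = s) ->
         um_unif_continuous mX mY f /\ um_unif_continuous mY mX g)].
Proof.
case=> _ Df_mono Df0 f_udist; split.
- exact: continuousE.
- exact: unif_continuousE.
- move=> g _ gK Df_onto; split.
  + exact/cont_at0_unif_continuous/surjective_cont_at0.
  + exact: inverse_unif_continuous gK.
Qed.
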